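(* Let $\mathfrak g$ be a Lie algebra with a Cartan subalgebra $\mathfrak h$ and a root decomposition with roots $\Delta$. Every $\mathbb R$-linear order $>$ on $\langle\Delta\rangle_{\mathbb R}$ determines a unique Borel subalgebra, namely $\mathfrak h\oplus\bigoplus_{\alpha\in\Delta^+}\mathfrak g^\alpha$ with $\Delta^\pm:=\{\alpha\in\Delta:\pm\alpha>0\}$; conversely, every Borel subalgebra of $\mathfrak g$ (containing $\mathfrak h$) is determined in this way by some (in general not unique) $\mathbb R$-linear order on $\langle\Delta\rangle_{\mathbb R}$.
   Context: Over $\mathbb C$. A Cartan subalgebra is a self-normalizing nilpotent subalgebra $\mathfrak h$; a root decomposition is $\mathfrak g=\mathfrak h\oplus\bigoplus_{\alpha\in\mathfrak h^*\setminus\{0\}}\mathfrak g^\alpha$ with $\mathfrak g^\alpha$ the generalized weight spaces, $\Delta=\{\alpha\ne0:\mathfrak g^\alpha\ne0\}$, and $\langle\Delta\rangle_{\mathbb R}$ the real span of $\Delta$ in $\mathfrak h^*$. A decomposition $\Delta=\Delta^+\sqcup\Delta^-$ is triangular if the cone $\langle\Delta^+\cup-\Delta^-\rangle_{\mathbb R_+}$ contains no nonzero real vector subspace; a Borel subalgebra is $\mathfrak h\oplus\bigoplus_{\alpha\in\Delta^+}\mathfrak g^\alpha$ for a triangular decomposition. An $\mathbb R$-linear order on a real vector space is a total order compatible with addition and with multiplication by positive reals (multiplication by negative reals reversing it). *)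

From HB Require Import structures.
From mathcomp Require Import all_boot all_order all_algebra.
From mathcomp Require Import reals.
From mathcomp.real_closed Require Export complex.
Unset Printing Implicit Defensive.
Import Order.TTheory GRing.Theory Num.Theory.
Local Open Scope ring_scope.

Section LieDefs.
Context {R : realType}.
Local Notation C := R[i].
Context {L : lmodType C}.
Variable br : L -> L -> L.

Definition lie_bracket : Prop :=
  [/\ (forall (a : C) x y z, br (a *: x + y) z = a *: br x z + br y z),
      (forall (a : C) x y z, br z (a *: x + y) = a *: br z x + br z y),
      (forall x, br x x = 0) &
      (forall x y z, br x (br y z) + br y (br z x) + br z (br x y) = 0)].

Variable H : L -> Prop.

Definition subalgebra : Prop :=
  [/\ H 0, (forall (a : C) x y, H x -> H y -> H (a *: x + y)) &
      (forall x y, H x -> H y -> H (br x y))].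

Fixpoint all_in (xs : seq L) : Prop :=
  if xs is y :: ys then H y /\ all_in ys else True.

(* nilpotent: some term H^{n+1} of the lower central series
   (H^1 = H, H^{k+1} = [H, H^k]) vanishes, i.e. all brackets
   [x_1,[x_2,...,[x_n, x]]] of n+1 elements of H are 0. *)
Definition nilpotent_sub : Prop :=
  exists n : nat, forall x xs, size xs = n -> H x -> all_in xs -> foldr br x xs = 0.

Definition self_normalizing : Prop :=
  forall x, (forall y, H y -> H (br x y)) -> H x.

Definition cartan : Prop := [/\ subalgebra, nilpotent_sub & self_normalizing].

Definition hT := {x : L | H x}.
Definition hfun := hT -> C.

Definition hdual (f : hfun) : Prop :=
  forall (a : C) (x y z : hT), proj1_sig z = a *: proj1_sig x + proj1_sig y ->
    f z = a * f x + f y.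

Definition fzero : hfun := fun _ => 0.
Definition fopp (f : hfun) : hfun := fun h => - f h.
Definition fadd (f g : hfun) : hfun := fun h => f h + g h.
Definition rscale (r : R) (f : hfun) : hfun := fun h => Complex r 0 * f h.
Definition rlincomb n (r : 'I_n -> R) (a : 'I_n -> hfun) : hfun :=
  fun h => \sum_(i < n) Complex (r i) 0 * a i h.

Definition gws (alpha : hfun) (x : L) : Prop :=
  forall h : hT, exists n : nat,
    iter n (fun v => br (proj1_sig h) v - alpha h *: v) x = 0.

(* root decomposition g = h (+) (+)_{alpha in h^* \ 0} g^alpha (internal direct sum) *)
Definition root_decomposition : Prop :=
  (forall x, exists x0 n (a : 'I_n -> hfun) (v : 'I_n -> L),
      [/\ H x0, (forall i, [/\ hdual (a i), a i <> fzero & gws (a i) (v i)]) &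
          x = x0 + \sum_(i < n) v i]) /\
  (forall x0 n (a : 'I_n -> hfun) (v : 'I_n -> L),
      H x0 -> injective a ->
      (forall i, [/\ hdual (a i), a i <> fzero & gws (a i) (v i)]) ->
      x0 + \sum_(i < n) v i = 0 -> x0 = 0 /\ forall i, v i = 0).

Definition roots (alpha : hfun) : Prop :=
  [/\ hdual alpha, alpha <> fzero & exists x, x <> 0 /\ gws alpha x].

Definition rspan (f : hfun) : Prop :=
  exists n (r : 'I_n -> R) (a : 'I_n -> hfun),
    (forall i, roots (a i)) /\ f = rlincomb n r a.

Definition tcone (Dp Dm : hfun -> Prop) (f : hfun) : Prop :=
  exists n (r : 'I_n -> R) (a : 'I_n -> hfun),
    (forall i, 0 <= r i /\ (Dp (a i) \/ Dm (fopp (a i)))) /\ f = rlincomb n r a.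

Definition real_subspace (V : hfun -> Prop) : Prop :=
  [/\ V fzero, (forall f g, V f -> V g -> V (fadd f g)) &
      (forall r f, V f -> V (rscale r f))].

Definition triangular (Dp Dm : hfun -> Prop) : Prop :=
  [/\ (forall alpha, roots alpha <-> (Dp alpha \/ Dm alpha)),
      (forall alpha, ~ (Dp alpha /\ Dm alpha)) &
      (forall V, real_subspace V -> (forall f, V f -> tcone Dp Dm f) ->
         forall f, V f -> f = fzero)].

Definition borel_of (Dp : hfun -> Prop) (x : L) : Prop :=
  exists x0 n (a : 'I_n -> hfun) (v : 'I_n -> L),
    [/\ H x0, (forall i, Dp (a i) /\ gws (a i) (v i)) & x = x0 + \sum_(i < n) v i].

Definition borel (B : L -> Prop) : Prop :=
  exists Dp Dm, triangular Dp Dm /\ forall x, B x <-> borel_of Dp x.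

Definition rlinear_order (V : hfun -> Prop) (le : hfun -> hfun -> Prop) : Prop :=
  [/\ (forall f, V f -> le f f),
      (forall f g, V f -> V g -> le f g -> le g f -> f = g),
      (forall f g k, V f -> V g -> V k -> le f g -> le g k -> le f k),
      (forall f g, V f -> V g -> le f g \/ le g f) &
    [/\ (forall f g k, V f -> V g -> V k -> le f g -> le (fadd f k) (fadd g k)),
      (forall r f g, V f -> V g -> 0 < r -> le f g -> le (rscale r f) (rscale r g)) &
      (forall r f g, V f -> V g -> r < 0 -> le f g -> le (rscale r g) (rscale r f))]].

Definition pos_roots (le : hfun -> hfun -> Prop) (alpha : hfun) : Prop :=
  roots alpha /\ (le fzero alpha /\ alpha <> fzero).
Definition neg_roots (le : hfun -> hfun -> Prop) (alpha : hfun) : Prop :=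
  roots alpha /\ (le fzero (fopp alpha) /\ fopp alpha <> fzero).

End LieDefs.

(* An R-linear order on a real vector space amounts to a pointed convex cone
   (its nonnegative elements) containing v or -v for every v.  Given an order,
   this cone contains Delta^+ and -Delta^-, hence so does the cone generated by
   them, which therefore contains no nonzero subspace: the decomposition is
   triangular.  Conversely, triangularity says exactly that the cone generated
   by Delta^+ and -Delta^- is pointed.  By Zorn's lemma it lies in a maximal
   pointed cone, which is total since adjoining v to a pointed cone that misses
   -v keeps it pointed; the resulting order has Delta^+ as its positive roots. *)

From Pilot Require Import Defs.
From HB Require Import structures.
From mathcomp Require Import all_boot all_order all_algebra.
From mathcomp Require Import reals.
From mathcomp.real_closed Require Import complex.
From mathcomp Require Import boolp classical_sets functions.
Import Order.TTheory GRing.Theory Num.Theory.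
Local Open Scope ring_scope.
Local Open Scope classical_set_scope.

Section Combinations.
Context {R : pzRingType} {V : lmodType R}.
Implicit Types (P : R -> V -> Prop) (K : set V) (u v : V).

Definition fcat {T} {n m} (f : 'I_n -> T) (g : 'I_m -> T) (i : 'I_(n + m)) : T :=
  match fintype.split i with inl j => f j | inr k => g k end.

Definition combinations P : set V :=
  [set u | exists n (r : 'I_n -> R) (a : 'I_n -> V),
     (forall i, P (r i) (a i)) /\ u = \sum_(i < n) r i *: a i].

Lemma combinations0 P : combinations P 0.
Proof. by exists 0%N, (fun => 0), (fun => 0); split; [case | rewrite big_ord0]. Qed.

Lemma combinations1 P r a : P r a -> combinations P (r *: a).
Proof. by move=> Pra; exists 1%N, (fun => r), (fun => a); rewrite big_ord1. Qed.

Lemma combinationsD P u v :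
  combinations P u -> combinations P v -> combinations P (u + v).
Proof.
move=> [n [r [a [Pra ->]]]] [m [s [b [Psb ->]]]].
exists (n + m)%N, (fcat r s), (fcat a b); split.
  by move=> i; rewrite /fcat; case: fintype.split.
rewrite big_split_ord /fcat; congr (_ + _); apply: eq_bigr => i _.
  by rewrite (unsplitK (inl _ i)).
by rewrite (unsplitK (inr _ i)).
Qed.

Lemma combinationsZ P t u : (forall r a, P r a -> P (t * r) a) ->
  combinations P u -> combinations P (t *: u).
Proof.
move=> PZ [n [r [a [Pra ->]]]]; exists n, (fun i => t * r i), a.
by split=> [i|]; [exact: PZ | rewrite scaler_sumr; under eq_bigr do rewrite scalerA].
Qed.

Lemma combinations_min P K : K 0 -> (forall u v, K u -> K v -> K (u + v)) ->
  (forall r a, P r a -> K (r *: a)) -> combinations P `<=` K.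
Proof.
move=> K0 KD KP _ [n [r [a [Pra ->]]]].
by elim/big_ind: _ => // i _; exact: KP.
Qed.

End Combinations.

Section Cones.
Context {R : realFieldType} {V : lmodType R}.
Implicit Types (A G K P S : set V) (u v : V).

Definition cone K := [/\ K 0, forall u v, K u -> K v -> K (u + v) &
  forall r u, 0 <= r -> K u -> K (r *: u)].

Definition pointed K := forall u, K u -> K (- u) -> u = 0.

Definition subspace S := [/\ S 0, forall u v, S u -> S v -> S (u + v) &
  forall r u, S u -> S (r *: u)].

Lemma cone_line K u : cone K -> K u -> K (- u) -> forall t, K (t *: u).
Proof.
move=> [_ _ KZ] Ku KNu t; have [t_ge0|t_lt0] := lerP 0 t; first exact: KZ.
have -> : t *: u = (- t) *: (- u) by rewrite scaleNr scalerN opprK.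
by apply: KZ => //; rewrite oppr_ge0 ltW.
Qed.

Definition conic_hull G := combinations (fun r a => 0 <= r /\ G a).

Lemma conic_hull_cone G : cone (conic_hull G).
Proof.
split; [exact: combinations0 | exact: combinationsD |].
move=> t u t_ge0; apply: combinationsZ => r a [r_ge0 Ga].
by split => //; exact: mulr_ge0.
Qed.

Lemma sub_conic_hull G : G `<=` conic_hull G.
Proof. by move=> a Ga; rewrite -[a]scale1r; apply: combinations1. Qed.

Lemma conic_hull_min G K : cone K -> G `<=` K -> conic_hull G `<=` K.
Proof.
move=> [K0 KD KZ] GK; apply: combinations_min => // r a [r_ge0 Ga].
by apply: KZ => //; exact: GK.
Qed.

Definition lin_span G := combinations (fun _ a => G a).

Lemma lin_span_subspace G : subspace (lin_span G).
Proof.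
split; [exact: combinations0 | exact: combinationsD |].
by move=> t u; apply: combinationsZ.
Qed.

Lemma sub_lin_span G : G `<=` lin_span G.
Proof. by move=> a Ga; rewrite -[a]scale1r; apply: combinations1. Qed.

Lemma subspace_line u : subspace [set t *: u | t in [set: R]].
Proof.
split; first by exists 0; rewrite ?scale0r.
- by move=> _ _ [t _ <-] [s _ <-]; exists (t + s); rewrite ?scalerDl.
- by move=> r _ [t _ <-]; exists (r * t); rewrite ?scalerA.
Qed.

Lemma pointed_subspace K S : pointed K -> subspace S -> S `<=` K -> S `<=` [set 0].
Proof.
move=> Kpt [_ _ SZ] SK u Su; apply: Kpt; first exact: SK.
by apply: SK; rewrite -scaleN1r; exact: SZ.
Qed.

Lemma subspace_pointed K : cone K ->
  (forall S, subspace S -> S `<=` K -> S `<=` [set 0]) -> pointed K.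
Proof.
move=> Kcone Ksub u Ku KNu; apply: (Ksub _ (subspace_line u)).
  by move=> _ [t _ <-]; exact: cone_line.
by exists 1; rewrite ?scale1r.
Qed.

Lemma pointed_cone_bigcup (F : set (set V)) : F !=set0 ->
  total_on F subset -> (forall A, F A -> cone A /\ pointed A) ->
  cone (\bigcup_(A in F) A) /\ pointed (\bigcup_(A in F) A).
Proof.
move=> [A0 FA0] Ftot Fcone.
have common A B u v : F A -> F B -> A u -> B v ->
    exists2 C, F C & [/\ cone C, pointed C, C u & C v].
  move=> FA FB Au Bv; have [AB|BA] := Ftot A B FA FB.
    by exists B => //; have [] := Fcone B FB; split => //; exact: AB.
  by exists A => //; have [] := Fcone A FA; split => //; exact: BA.
split; first split.
- by exists A0 => //; have [[]] := Fcone A0 FA0.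
- move=> u v [A FA Au] [B FB Bv].
  have [C FC [[_ CD _] _ Cu Cv]] := common A B u v FA FB Au Bv.
  by exists C => //; exact: CD.
- move=> r u r_ge0 [A FA Au]; exists A => //.
  by have [[_ _ AZ] _] := Fcone A FA; exact: AZ.
- move=> u [A FA Au] [B FB BNu].
  by have [C FC [_ Cpt Cu CNu]] := common A B u (- u) FA FB Au BNu; exact: Cpt.
Qed.

Definition cone_adjoin A v : set V :=
  [set p + t *: v | p in A & t in [set t : R | 0 <= t]].

Lemma cone_adjoin_cone A v : cone A -> cone (cone_adjoin A v).
Proof.
move=> [A0 AD AZ]; split.
- by exists 0 => //; exists 0; rewrite /= ?lexx ?scale0r ?addr0.
- move=> _ _ [p Ap [t t_ge0 <-]] [q Aq [s s_ge0 <-]].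
  exists (p + q); first exact: AD.
  exists (t + s); first exact: addr_ge0.
  by rewrite scalerDl addrACA.
- move=> r _ r_ge0 [p Ap [t t_ge0 <-]]; exists (r *: p); first exact: AZ.
  by exists (r * t); [exact: mulr_ge0 | rewrite scalerDr scalerA].
Qed.

Lemma sub_cone_adjoin A v : cone A -> A `<=` cone_adjoin A v.
Proof. by move=> _ p Ap; exists p => //; exists 0; rewrite /= ?lexx ?scale0r ?addr0. Qed.

Lemma cone_adjoin_gen A v : cone A -> cone_adjoin A v v.
Proof. by move=> [A0 _ _]; exists 0 => //; exists 1; rewrite /= ?ler01 ?scale1r ?add0r. Qed.

(* If p + t v = -(q + s v), then -v is a nonnegative multiple of p + q unless
   t = s = 0. *)
Lemma cone_adjoin_pointed A v : cone A -> pointed A -> ~ A (- v) ->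
  pointed (cone_adjoin A v).
Proof.
move=> [A0 AD AZ] Apt ANv _ [p Ap [t t_ge0 <-]] [q Aq [s s_ge0 Eq]].
have pq : p + q = - ((t + s) *: v).
  by apply/eqP; rewrite -subr_eq0 opprK scalerDl addrACA Eq subrr.
have [ts_gt0|] := ltrP 0 (t + s).
  exfalso; apply: ANv.
  have -> : - v = (t + s)^-1 *: (p + q).
    by rewrite pq scalerN scalerA mulVf ?scale1r // gt_eqF.
  by apply: AZ; [rewrite invr_ge0 ltW | exact: AD].
rewrite le_eqVlt ltNge addr_ge0 // orbF paddr_eq0 // => /andP[/eqP t0 /eqP s0].
move: pq; rewrite t0 s0 addr0 !scale0r !addr0 oppr0 => /eqP; rewrite addr_eq0 => /eqP qE.
by apply: Apt => //; rewrite qE opprK.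
Qed.

Lemma pointed_cone_extension K : cone K -> pointed K ->
  exists P, [/\ cone P, pointed P, K `<=` P & forall v, P v \/ P (- v)].
Proof.
move=> Kcone Kpt.
pose good A := [/\ cone A, pointed A & K `<=` A].
pose incl (X Y : {A | good A}) := `[< sval X `<=` sval Y >].
have [[A [Acone Apt KA]] Amax] : exists X, forall Y, incl X Y -> Y = X.
  apply: Zorn => [X|X Y Z /asboolP XY /asboolP YZ|[A gA] [B gB] /asboolP AB /asboolP BA|C Ctot].
  - exact/asboolP.
  - by apply/asboolP; exact: subset_trans YZ.
  - exact/eq_exist/seteqP.
  pose F := K |` [set sval X | X in C].
  have [Fcone Fpt] : cone (\bigcup_(A in F) A) /\ pointed (\bigcup_(A in F) A).
    apply: pointed_cone_bigcup; first by exists K; left.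
      move=> _ _ [->|[X CX <-]] [->|[Y CY <-]].
      - by left.
      - by left; case: Y {CY} => ? [].
      - by right; case: X {CX} => ? [].
      - by have [/asboolP|/asboolP] := Ctot X Y CX CY; [left | right].
    by move=> _ [->|[[A gA] _ <-]] //; case: gA.
  have KF : K `<=` \bigcup_(A in F) A by move=> u Ku; exists K => //; left.
  exists (exist good _ (And3 Fcone Fpt KF)) => X CX; apply/asboolP => u Xu.
  by exists (sval X) => //; right; exists X.
exists A; split => // v; have [ANv|ANv] := pselect (A (- v)); [by right | left].
have Bgood : good (cone_adjoin A v).
  split; [exact: cone_adjoin_cone | exact: cone_adjoin_pointed |].
  by move=> u /KA; exact: sub_cone_adjoin.
have /Amax [<-] : incl (exist _ A (And3 Acone Apt KA)) (exist _ _ Bgood).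
  exact/asboolP/sub_cone_adjoin.
exact: cone_adjoin_gen.
Qed.

End Cones.

Section LinearOrders.
Context {R : realFieldType} {V : lmodType R}.
Implicit Types (P S : set V) (u v : V).

Definition linear_order_on S (le : V -> V -> Prop) :=
  [/\ (forall u, S u -> le u u),
      (forall u v, S u -> S v -> le u v -> le v u -> u = v),
      (forall u v w, S u -> S v -> S w -> le u v -> le v w -> le u w),
      (forall u v, S u -> S v -> le u v \/ le v u) &
    [/\ (forall u v w, S u -> S v -> S w -> le u v -> le (u + w) (v + w)),
      (forall r u v, S u -> S v -> 0 < r -> le u v -> le (r *: u) (r *: v)) &
      (forall r u v, S u -> S v -> r < 0 -> le u v -> le (r *: v) (r *: u))]].

Lemma linear_order_nonneg_cone S le : subspace S -> linear_order_on S le ->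
  [/\ cone [set u | S u /\ le 0 u], pointed [set u | S u /\ le 0 u] &
      forall u, S u -> le 0 u \/ le 0 (- u)].
Proof.
move=> [S0 SD SZ] [refl anti trans tot [leD leZ _]].
have SN u : S u -> S (- u) by move=> Su; rewrite -scaleN1r; exact: SZ.
have le_add u v : S u -> S v -> le 0 u -> le v (u + v).
  by move=> Su Sv /(leD _ _ v S0 Su Sv); rewrite add0r.
split; first split.
- by split => //; exact: refl.
- move=> u v [Su le0u] [Sv le0v]; split; first exact: SD.
  exact: trans (SD _ _ Su Sv) le0v (le_add _ _ Su Sv le0u).
- move=> r u r_ge0 [Su le0u]; split; first exact: SZ.
  have [->|r_gt0] := eqVneq r 0; first by rewrite scale0r; exact: refl.
  by rewrite -(scaler0 _ r); apply: leZ => //; rewrite lt_def r_gt0.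
- move=> u [Su le0u] [_ le0Nu]; apply: anti => //.
  by have := le_add _ _ (SN _ Su) Su le0Nu; rewrite addNr.
- move=> u Su; have [|leu0] := tot _ _ S0 Su; first by left.
  by right; have := leD _ _ _ Su S0 (SN _ Su) leu0; rewrite subrr add0r.
Qed.

Lemma cone_linear_order S P : cone P -> pointed P -> (forall u, P u \/ P (- u)) ->
  linear_order_on S (fun u v => P (v - u)).
Proof.
move=> [P0 PD PZ] Ppt Ptot; split; first by move=> u _; rewrite subrr.
- move=> u v _ _ Pvu Puv.
  have /eqP : v - u = 0 by apply: Ppt; rewrite ?opprB.
  by rewrite subr_eq0 => /eqP.
- move=> u v w _ _ _ Pvu Pwv.
  have -> : w - u = (w - v) + (v - u) by rewrite addrA subrK.
  exact: PD.
- by move=> u v _ _; rewrite -[u - v]opprB; exact: Ptot.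
split.
- by move=> u v w _ _ _; rewrite opprD addrACA subrr addr0.
- by move=> r u v _ _ r_gt0 Pvu; rewrite -scalerBr; apply: PZ => //; exact: ltW.
- move=> r u v _ _ r_lt0 Pvu; rewrite -scalerBr -opprB scalerN -scaleNr.
  by apply: PZ => //; rewrite oppr_ge0 ltW.
Qed.

End LinearOrders.

Section RootOrders.
Context {R : realType} {L : lmodType R[i]} {br : L -> L -> L} {H : L -> Prop}.
(* hfun H has no R-module structure of its own; its alias with values in
   Rcomplex R has the pointwise one, whose operations agree with fzero, fopp
   and fadd by conversion and with rscale only up to a computation. *)
Local Notation hvec := (hT H -> Rcomplex R).
Local Notation roots := (Defs.roots br H).
Local Notation rspan := (Defs.rspan br H).
Local Notation pos_roots := (pos_roots br H).
Local Notation neg_roots := (neg_roots br H).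

Lemma fzeroE : fzero H = 0 :> hvec.
Proof. by []. Qed.

Lemma foppE (f : hfun H) : fopp H f = - (f : hvec).
Proof. by []. Qed.

Lemma rscaleE r (f : hfun H) : rscale H r f = r *: (f : hvec).
Proof.
apply/funext => h; rewrite /rscale.
change ((r *: (f : hvec)) h) with (r *: (f h : Rcomplex R)).
case: (f h) => a b; rewrite [RHS]/GRing.scale /=.
by rewrite [LHS]/GRing.mul /= !mul0r subr0 addr0.
Qed.

Lemma rlincombE n r (a : 'I_n -> hfun H) :
  rlincomb H n r a = \sum_(i < n) r i *: (a i : hvec).
Proof.
rewrite fct_sumE; apply/funext => h; apply: eq_bigr => i _.
by rewrite -rscaleE.
Qed.

Lemma rscale_scale : rscale H = fun r (f : hvec) => r *: f.
Proof. by apply/funext => r; apply/funext => f; exact: rscaleE. Qed.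

Lemma rlinear_orderE (S : set hvec) (le : hvec -> hvec -> Prop) :
  rlinear_order H S le = linear_order_on S le.
Proof. by rewrite /rlinear_order rscale_scale. Qed.

Lemma real_subspaceE (S : set hvec) : real_subspace H S = subspace S.
Proof. by rewrite /real_subspace rscale_scale. Qed.

Lemma tconeE (Dp Dm : set hvec) :
  tcone H Dp Dm = conic_hull [set a | Dp a \/ Dm (- a)].
Proof.
apply/funext => f; apply/propext.
by split=> -[n [r [a [Pra ->]]]]; exists n, r, a; rewrite rlincombE.
Qed.

Lemma rspanE : rspan = lin_span (roots : set hvec).
Proof.
apply/funext => f; apply/propext.
by split=> -[n [r [a [Pra ->]]]]; exists n, r, a; rewrite rlincombE.
Qed.

Lemma rspan_subspace : subspace (rspan : set hvec).
Proof. by rewrite rspanE; exact: lin_span_subspace. Qed.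

Lemma roots_rspan : (roots : set hvec) `<=` rspan.
Proof. by rewrite rspanE; exact: sub_lin_span. Qed.

Lemma rlinear_order_triangular le : rlinear_order H rspan le ->
  triangular br H (pos_roots le) (neg_roots le).
Proof.
rewrite rlinear_orderE => le_order.
have [Qcone Qpt le_tot] := linear_order_nonneg_cone _ _ rspan_subspace le_order.
have [_ _ SZ] := rspan_subspace.
have rspanN a : rspan a -> rspan (- a :> hvec).
  by move=> Sa; have := SZ (-1) a Sa; rewrite scaleN1r.
split.
- move=> a; split=> [Ra|[[]|[]]//]; have [_ a_neq0 _] := Ra.
  have [le0a|le0Na] := le_tot a (roots_rspan _ Ra); [left | right]; do 2?split => //.
  by move=> /(congr1 (fun f : hvec => - f)); rewrite opprK oppr0.
- move=> a [[Ra [le0a a_neq0]] [_ [le0Na _]]]; apply: a_neq0.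
  by apply: Qpt; split => //; [exact: roots_rspan | apply: rspanN; exact: roots_rspan].
- move=> W; rewrite real_subspaceE => Wsub Wcone.
  have gen : [set a : hvec | pos_roots le a \/ neg_roots le (- a)] `<=`
             [set u | rspan u /\ le 0 u].
    move=> a [[Ra [le0a _]]|[RNa [le0Na _]]]; split => //; first exact: roots_rspan.
      by rewrite -[a]opprK; apply: rspanN; exact: roots_rspan.
    by move: le0Na; rewrite foppE opprK.
  apply: pointed_subspace Qpt Wsub _ => f /Wcone; rewrite tconeE.
  exact: conic_hull_min Qcone gen f.
Qed.

Lemma triangular_rlinear_order Dp Dm : triangular br H Dp Dm ->
  exists le, rlinear_order H rspan le /\ pos_roots le = Dp.
Proof.
move=> [rootsE _ no_subspace].
have Kcone := conic_hull_cone [set a : hvec | Dp a \/ Dm (- a)].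
have Kpt : pointed (conic_hull [set a : hvec | Dp a \/ Dm (- a)]).
  apply: subspace_pointed => // S; rewrite -real_subspaceE -tconeE => Ssub SK u Su.
  exact: no_subspace Ssub SK u Su.
have [P [Pcone Ppt KP Ptot]] := pointed_cone_extension _ Kcone Kpt.
exists (fun u v => P (v - u)); split; first by rewrite rlinear_orderE; exact: cone_linear_order.
apply/funext => a; apply/propext; rewrite /Defs.pos_roots fzeroE subr0; split.
- move=> [Ra [Pa a_neq0]]; have [//|Dma] := (rootsE a).1 Ra.
  case: a_neq0; apply: Ppt => //; apply/KP/sub_conic_hull; right.
  by rewrite opprK.
- move=> Dpa; have Ra : roots a by apply/rootsE; left.
  have [_ a_neq0 _] := Ra; do 2?split => //.
  by apply/KP/sub_conic_hull; left.
Qed.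

End RootOrders.

Theorem proposition9 (R : realType) (L : lmodType R[i]) (br : L -> L -> L)
    (H : L -> Prop) :
  lie_bracket br -> cartan br H -> root_decomposition br H ->
  (forall le, rlinear_order H (rspan br H) le ->
     triangular br H (pos_roots br H le) (neg_roots br H le) /\
     borel br H (borel_of br H (pos_roots br H le))) /\
  (forall B, borel br H B ->
     exists le, rlinear_order H (rspan br H) le /\
       forall x, B x <-> borel_of br H (pos_roots br H le) x).
Proof.
move=> _ _ _; split=> [le le_order | B [Dp [Dm [tri defB]]]].
  have tri := rlinear_order_triangular _ le_order.
  by split => //; exists (pos_roots br H le), (neg_roots br H le).
have [le [le_order posE]] := triangular_rlinear_order _ _ tri.
by exists le; split => // x; rewrite defB posE.
Qed.
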